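(* Let $n<N$ be powers of $2$ and let $\delta=N/n$. Let $S_m$ (for $m$ a power of $4$) denote the STOne matrices: $S_4=\frac12\begin{pmatrix}-1&1&1&1\\ 1&-1&1&1\\ 1&1&-1&1\\ 1&1&1&-1\end{pmatrix}$ and $S_{4^{k+1}}=S_4\otimes S_{4^k}$ for $k\ge1$ (Kronecker product). Let $P=I_{n^2}\otimes 1_{\delta^2}$, an $N^2\times n^2$ matrix, where $1_{\delta^2}$ is the $\delta^2\times 1$ vector of ones. Let $R$ be an $N^2\times N^2$ diagonal matrix with diagonal entries in $\{0,1\}$, written in block-diagonal form $R=\mathrm{diag}(R_1,\dots,R_{n^2})$ with each $R_i$ a $\delta^2\times\delta^2$ diagonal block, and let $b\in\mathbb{R}^{N^2}$ satisfy $Rb=b$, written in blocks $b=(b_1;\dots;b_{n^2})$ with $b_i=(b_{i,1},\dots,b_{i,\delta^2})\in\mathbb{R}^{\delta^2}$. Consider the preview equation $R S_{N^2} P u = b$ for $u\in\mathbb{R}^{n^2}$. (i) If each $R_i$ has exactly one nonzero diagonal entry, then the preview equation has a unique solution, given by $u=S_{n^2}\bar b$, where $\bar b\in\mathbb{R}^{n^2}$ has $i$-th entry equal to the entry of $b_i$ at the position of the nonzero diagonal entry of $R_i$. (ii) If each $R_i$ has at least one nonzero diagonal entry, then the least-squares solution of the preview equation, i.e. the minimizer of $\|R S_{N^2}Pu-b\|^2$ over $u\in\mathbb{R}^{n^2}$, is $u=S_{n^2}\hat b$, where $\hat b_i=\left(\sum_{\gamma=1}^{\delta^2} b_{i,\gamma}\right)\big/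 \mathrm{tr}(R_i)$, i.e. $\hat b_i$ is the mean of the entries of $b_i$ at the positions selected by $R_i$.
   Context: Interpretation: an $N\times N$ image is vectorized so that each of the $n^2$ non-overlapping $\delta\times\delta$ patches occupies a contiguous block of $\delta^2$ entries; $P$ is then the prolongation operator replacing each pixel of an $n\times n$ image by a constant $\delta\times\delta$ patch. $R$ is a ''row selector'': $R_{j,j}=1$ iff row $j$ of $S_{N^2}$ has been measured, and $b$ is the measurement vector, whose entries at unmeasured positions are zero (i.e. $Rb=b$); the ''known entries'' of $b$ are those at positions where $R$ has a $1$. Note $S_{N^2}=S_{n^2}\otimes S_{\delta^2}$. *)

From HB Require Import structures.
From mathcomp Require Import all_boot all_order all_algebra.
Set Implicit Arguments. Unset Strict Implicit. Unset Printing Implicit Defensive.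
Import Order.TTheory GRing.Theory Num.Theory.
Local Open Scope ring_scope.

Definition S4e {R : realFieldType} (i j : nat) : R :=
  (if i == j then -1 else 1) / 2.

(* Entries of the STone matrix S_{4^k}, with S_{4^(k+1)} = S_4 (x) S_{4^k}
   (Kronecker product, outer index = S_4 index, row-major), and the
   convention S_{4^0} = S_1 = [1] (so that S_4 = S_4 (x) S_1). *)
Fixpoint STonee {R : realFieldType} (k : nat) (i j : nat) : R :=
  match k with
  | 0 => 1
  | k'.+1 => S4e (i %/ 4 ^ k') (j %/ 4 ^ k') * STonee k' (i %% 4 ^ k') (j %% 4 ^ k')
  end.

Definition STone {R : realFieldType} (k : nat) : 'M[R]_(4 ^ k) :=
  \matrix_(i, j) STonee k i j.

(* With n = 2^a, N = 2^c, delta = N/n: index j of R^{N^2} lies in patch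
   (block) number j %/ delta^2, where delta^2 = 4^(c-a). *)
Definition blk (a c : nat) (j : nat) : nat := (j %/ 4 ^ (c - a))%N.

Definition Pmx {R : realFieldType} (a c : nat) : 'M[R]_(4 ^ c, 4 ^ a) :=
  \matrix_(j, i) (blk a c j == i)%:R.

Definition sqnorm {R : realFieldType} {m : nat} (x : 'cV[R]_m) : R :=
  \sum_(j < m) (x j 0) ^+ 2.

(* S_4 is a symmetric involution with unit row sums, and both properties pass
   to the Kronecker powers S_{4^k}.  Since S_{N^2} = S_{n^2} (x) S_{delta^2} and
   S_{delta^2} has unit row sums, S_{N^2} P = P S_{n^2}; hence with w = S_{n^2} u
   the preview equation reads R_jj w_(patch j) = b_j coordinatewise, and the
   involution S_{n^2} transports every statement about w back to u.  With one
   selected pixel per patch this determines w.  In general the residual splits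
   as sum_j R_jj (w_(patch j) - bhat_(patch j))^2 plus a constant, the cross
   term vanishing because bhat is the patchwise mean of the selected entries,
   so bhat is the unique minimizer. *)

From HB Require Import structures.
From mathcomp Require Import all_boot all_order all_algebra.
From mathcomp Require Import ring lra.
Import Order.TTheory GRing.Theory Num.Theory.
Local Open Scope ring_scope.

Lemma sum_nat_mul_split (V : nmodType) m k (F : nat -> V) :
  \sum_(0 <= j < m * k) F j = \sum_(0 <= q < m) \sum_(0 <= g < k) F (q * k + g)%N.
Proof.
rewrite big_nat_mul; apply: eq_bigr => q _.
rewrite -{1}[(q * k)%N]add0n big_addn mulSnr addKn.
by apply: eq_bigr => g _; rewrite addnC.
Qed.

Lemma divn_mulDl_small d q g : (g < d)%N -> ((q * d + g) %/ d = q)%N.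
Proof. by move=> hg; rewrite divnMDl ?(leq_ltn_trans _ hg) // divn_small ?addn0. Qed.

Lemma modn_mulDl_small d q g : (g < d)%N -> ((q * d + g) %% d = g)%N.
Proof. by move=> hg; rewrite modnMDl modn_small. Qed.

Lemma sum_nat_indicator (V : pzRingType) n x (F : nat -> V) : (x < n)%N ->
  \sum_(0 <= q < n) (x == q)%:R * F q = F x.
Proof.
move=> hx; rewrite (bigD1_seq x) ?mem_index_iota ?iota_uniq //= eqxx mul1r.
by rewrite big1 ?addr0 // => q /negbTE; rewrite eq_sym => ->; rewrite mul0r.
Qed.

Lemma blk_lt a c j : (a <= c)%N -> (j < 4 ^ c)%N -> (blk a c j < 4 ^ a)%N.
Proof. by move=> hac hj; rewrite /blk ltn_divLR ?expn_gt0 // -expnD subnKC. Qed.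

Lemma mulmx_diag_col (R : pzRingType) n (A : 'M[R]_n) (x : 'cV[R]_n) j :
  is_diag_mx A -> (A *m x) j 0 = A j j * x j 0.
Proof.
move=> /is_diag_mxP hA; rewrite mxE (bigD1 j) //= big1 ?addr0 // => k hk.
by rewrite hA ?mul0r // eq_sym.
Qed.

Lemma sqr_split_weighted (R : comPzRingType) (r x y z : R) :
  r * (x - z) ^+ 2 = r * (x - y) ^+ 2 + r * (y - z) ^+ 2 + 2 * (r * ((x - y) * (y - z))).
Proof. by ring. Qed.

Section STone.

Variable R : realFieldType.

Lemma S4e_rowsum x : (x < 4)%N -> \sum_(0 <= q < 4) S4e (R:=R) x q = 1.
Proof.
by case: x => [|[|[|[|x]]]] // _; rewrite /index_iota /= !big_cons big_nil /S4e /=; lra.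
Qed.

Lemma S4e_involutive x y : (x < 4)%N -> (y < 4)%N ->
  \sum_(0 <= q < 4) S4e (R:=R) x q * S4e q y = (x == y)%:R.
Proof.
case: x => [|[|[|[|x]]]] // _; case: y => [|[|[|[|y]]]] // _;
  by rewrite /index_iota /= !big_cons big_nil /S4e /=; lra.
Qed.

Lemma STonee_S_mulDl k q g j : (g < 4 ^ k)%N ->
  STonee (R:=R) k.+1 (q * 4 ^ k + g) j = S4e q (j %/ 4 ^ k) * STonee k g (j %% 4 ^ k).
Proof. by move=> hg; rewrite /= divn_mulDl_small ?modn_mulDl_small. Qed.

Lemma sum_STonee_S k r (F : nat -> R) :
  \sum_(0 <= g < 4 ^ k.+1) STonee k.+1 r g * F g =
  \sum_(0 <= q < 4) S4e (r %/ 4 ^ k) q *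
    \sum_(0 <= g < 4 ^ k) STonee k (r %% 4 ^ k) g * F (q * 4 ^ k + g)%N.
Proof.
rewrite expnS sum_nat_mul_split; apply: eq_bigr => q _.
rewrite mulr_sumr; apply: eq_big_nat => g /andP[_ hg] /=.
by rewrite divn_mulDl_small ?modn_mulDl_small // mulrA.
Qed.

Lemma STonee_rowsum k r : (r < 4 ^ k)%N -> \sum_(0 <= g < 4 ^ k) STonee (R:=R) k r g = 1.
Proof.
elim: k r => [|k IH] r hr; first by rewrite big_nat1.
have := sum_STonee_S k r (fun=> 1); under eq_bigr do rewrite mulr1; move->.
under eq_bigr do rewrite (eq_bigr _ (fun g _ => mulr1 _)) IH ?ltn_mod ?expn_gt0 // mulr1.
by rewrite S4e_rowsum // ltn_divLR ?expn_gt0 // -expnS.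
Qed.

Lemma STonee_involutive k i j : (i < 4 ^ k)%N -> (j < 4 ^ k)%N ->
  \sum_(0 <= l < 4 ^ k) STonee (R:=R) k i l * STonee k l j = (i == j)%:R.
Proof.
elim: k i j => [|k IH] i j hi hj.
  by move: hi hj; rewrite !ltnS !leqn0 => /eqP-> /eqP->; rewrite big_nat1 mulr1.
have hlt x : (x < 4 ^ k.+1)%N -> (x %/ 4 ^ k < 4)%N.
  by move=> hx; rewrite ltn_divLR ?expn_gt0 // -expnS.
rewrite sum_STonee_S.
under eq_big_nat => q _.
  have -> : \sum_(0 <= g < 4 ^ k) STonee k (i %% 4 ^ k) g * STonee k.+1 (q * 4 ^ k + g) j
      = S4e (R:=R) q (j %/ 4 ^ k) * (i %% 4 ^ k == j %% 4 ^ k)%N%:R.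
    rewrite -(IH (i %% 4 ^ k)%N) ?ltn_mod ?expn_gt0 // mulr_sumr.
    by apply: eq_big_nat => g /andP[_ hg]; rewrite STonee_S_mulDl // mulrCA.
  rewrite mulrA.
over.
rewrite -big_distrl /= S4e_involutive ?hlt // -natrM mulnb.
do 2 apply: congr1; apply/idP/eqP => [/andP[/eqP e1 /eqP e2]|->]; last by rewrite !eqxx.
by rewrite (divn_eq i (4 ^ k)) (divn_eq j (4 ^ k)) e1 e2.
Qed.

Lemma STonee_add m k i j : (i < 4 ^ (m + k))%N -> (j < 4 ^ (m + k))%N ->
  STonee (R:=R) (m + k) i j =
  STonee m (i %/ 4 ^ k) (j %/ 4 ^ k) * STonee k (i %% 4 ^ k) (j %% 4 ^ k).
Proof.
elim: m i j => [|m IH] i j hi hj; first by rewrite /= !modn_small // mul1r.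
rewrite addSn /= IH ?ltn_mod ?expn_gt0 //.
rewrite -!divnMA -!expnD (addnC k m) !modn_divl -!expnD.
by rewrite !(@modn_dvdm (4 ^ (m + k)) _ (4 ^ k)) ?dvdn_exp2l ?leq_addl // mulrA.
Qed.

Lemma STone_involutive k : STone k *m STone k = 1%:M :> 'M[R]_(4 ^ k).
Proof.
apply/matrixP => i j; rewrite !mxE -(@STonee_involutive k i j (ltn_ord i) (ltn_ord j)).
by rewrite big_mkord; apply: eq_bigr => l _; rewrite !mxE.
Qed.

Lemma sum_STonee_patch a d r p : (r < 4 ^ (a + d))%N -> (p < 4 ^ a)%N ->
  \sum_(0 <= l < 4 ^ (a + d)) STonee (R:=R) (a + d) r l * (l %/ 4 ^ d == p)%N%:R =
  STonee a (r %/ 4 ^ d) p.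
Proof.
move=> hr hp; rewrite expnD sum_nat_mul_split.
rewrite -[RHS](@sum_nat_indicator _ _ _ (fun q => STonee a (r %/ 4 ^ d) q) hp).
apply: eq_big_nat => q /andP[_ hq].
have hl g : (g < 4 ^ d)%N -> (q * 4 ^ d + g < 4 ^ (a + d))%N.
  move=> hg; rewrite expnD (leq_trans (_ : _ < q.+1 * 4 ^ d)%N) //.
    by rewrite mulSnr ltn_add2l.
  by rewrite leq_mul2r hq orbT.
transitivity (\sum_(0 <= g < 4 ^ d) STonee (R:=R) d (r %% 4 ^ d) g *
                ((p == q)%:R * STonee a (r %/ 4 ^ d) q)).
  apply: eq_big_nat => g /andP[_ hg].
  rewrite STonee_add ?hl // divn_mulDl_small ?modn_mulDl_small // eq_sym.
  by rewrite mulrAC mulrC [_ * (_ == _)%:R]mulrC.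
by rewrite -mulr_suml STonee_rowsum ?ltn_mod ?expn_gt0 // mul1r.
Qed.

(* S_{N^2} = S_{n^2} (x) S_{delta^2} and S_{delta^2} has unit row sums,
   so the STone transform commutes with prolongation. *)
Lemma STone_Pmx a c : (a <= c)%N ->
  STone c *m Pmx a c = Pmx a c *m STone a :> 'M[R]_(4 ^ c, 4 ^ a).
Proof.
move=> hac; apply/matrixP => j i; rewrite !mxE.
under eq_bigr do rewrite !mxE.
under [in RHS]eq_bigr do rewrite !mxE.
rewrite -(big_mkord xpredT (fun l => STonee c j l * (blk a c l == i)%:R)).
rewrite -(big_mkord xpredT (fun l => (blk a c j == l)%:R * STonee a l i)).
rewrite sum_nat_indicator ?blk_lt //.
move: (ltn_ord j) (ltn_ord i); move: (nat_of_ord j) (nat_of_ord i) => r p.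
rewrite /blk; have [d ->] : exists d, c = (a + d)%N by exists (c - a)%N; rewrite subnKC.
by rewrite addKn; exact: sum_STonee_patch.
Qed.

Lemma STone_mulmxK k m (x : 'M[R]_(4 ^ k, m)) : STone k *m (STone k *m x) = x.
Proof. by rewrite mulmxA STone_involutive mul1mx. Qed.

Lemma STone_mulmx_eq k m (x y : 'M[R]_(4 ^ k, m)) :
  (x = STone k *m y) <-> (STone k *m x = y).
Proof. by split=> [->|<-]; rewrite STone_mulmxK. Qed.

End STone.

Section Preview.

Variables (R : realFieldType) (a c : nat).
Hypothesis hac : (a <= c)%N.
Variables (Rm : 'M[R]_(4 ^ c)) (b : 'cV[R]_(4 ^ c)).
Hypothesis Rm_diag : is_diag_mx Rm.
Hypothesis Rm01 : forall j, Rm j j = 0 \/ Rm j j = 1.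
Hypothesis Rm_b : Rm *m b = b.

Definition patch (j : 'I_(4 ^ c)) : 'I_(4 ^ a) := Ordinal (@blk_lt a c j hac (ltn_ord j)).

Lemma patchE j i : (patch j == i) = (blk a c j == i).
Proof. by rewrite -val_eqE. Qed.

Lemma Pmx_mul_col (w : 'cV[R]_(4 ^ a)) j : (Pmx a c *m w) j 0 = w (patch j) 0.
Proof.
rewrite mxE (bigD1 (patch j)) //= mxE eqxx mul1r big1 ?addr0 // => i hi.
by rewrite mxE -patchE eq_sym (negbTE hi) mul0r.
Qed.

Lemma preview_mul_col (w : 'cV[R]_(4 ^ a)) j :
  (Rm *m Pmx a c *m w) j 0 = Rm j j * w (patch j) 0.
Proof. by rewrite -mulmxA mulmx_diag_col // Pmx_mul_col. Qed.

Lemma preview_STone (u : 'cV[R]_(4 ^ a)) :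
  Rm *m STone c *m Pmx a c *m u = Rm *m Pmx a c *m (STone a *m u).
Proof. by rewrite -(mulmxA Rm) STone_Pmx // !mulmxA. Qed.

Lemma b_masked j : b j 0 = Rm j j * b j 0.
Proof. by rewrite -{1}Rm_b mulmx_diag_col. Qed.

Lemma Rm_ge0 j : 0 <= Rm j j.
Proof. by case: (Rm01 j) => ->; rewrite ?lexx ?ler01. Qed.

Lemma preview_single_solution (j0 : 'I_(4 ^ a) -> 'I_(4 ^ c)) :
  (forall i : 'I_(4 ^ a), blk a c (j0 i) = i) ->
  (forall (i : 'I_(4 ^ a)) (j : 'I_(4 ^ c)), blk a c j = i -> (Rm j j != 0 <-> j = j0 i)) ->
  forall w : 'cV[R]_(4 ^ a), Rm *m Pmx a c *m w = b <-> w = \col_i b (j0 i) 0.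
Proof.
move=> j0_patch sel w; split=> [eq_b | ->].
  apply/matrixP => i k; rewrite ord1 mxE -eq_b preview_mul_col.
  have -> : patch (j0 i) = i by apply: val_inj; exact: j0_patch.
  have : Rm (j0 i) (j0 i) != 0 by apply/(sel i _ (j0_patch i)).
  by case: (Rm01 (j0 i)) => ->; rewrite ?eqxx // mul1r.
apply/matrixP => j k; rewrite ord1 preview_mul_col mxE.
case: (Rm01 j) => Rjj; first by rewrite [RHS]b_masked Rjj !mul0r.
have -> : j0 (patch j) = j by symmetry; apply/(sel (patch j) j erefl); rewrite Rjj oner_neq0.
by rewrite Rjj mul1r.
Qed.

Definition patch_mean : 'cV[R]_(4 ^ a) :=
  \col_i ((\sum_(j < 4 ^ c | blk a c j == i) b j 0)
          / (\sum_(j < 4 ^ c | blk a c j == i) Rm j j)).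

Lemma preview_residual_sqr (w : 'cV[R]_(4 ^ a)) j :
  (Rm *m Pmx a c *m w - b) j 0 ^+ 2 = Rm j j * (w (patch j) 0 - b j 0) ^+ 2.
Proof.
have -> : (Rm *m Pmx a c *m w - b) j 0 = (Rm *m Pmx a c *m w) j 0 - b j 0 by rewrite !mxE.
rewrite preview_mul_col; case: (Rm01 j) => Rjj; last by rewrite Rjj !mul1r.
by rewrite b_masked Rjj !mul0r subrr expr0n.
Qed.

Section AllPatchesSelected.

Hypothesis patch_selected :
  forall i : 'I_(4 ^ a), exists j : 'I_(4 ^ c), blk a c j = i /\ Rm j j != 0.

Lemma patch_trace_gt0 (i : 'I_(4 ^ a)) : 0 < \sum_(j < 4 ^ c | blk a c j == i) Rm j j.
Proof.
have [j [<- Rj]] := patch_selected i.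
rewrite (bigD1 j) //= ltr_pwDl ?sumr_ge0 ?lt_def ?Rj ?Rm_ge0 // => j' _.
exact: Rm_ge0.
Qed.

(* The normal equations: on each patch, the mean makes the masked residual sum to zero. *)
Lemma sum_patch_mean_normal (x : 'cV[R]_(4 ^ a)) :
  \sum_j Rm j j * ((x (patch j) 0 - patch_mean (patch j) 0) *
                   (patch_mean (patch j) 0 - b j 0)) = 0.
Proof.
rewrite (partition_big patch xpredT) //=; apply: big1 => i _.
rewrite (eq_bigr (fun j => (x i 0 - patch_mean i 0) * (Rm j j * patch_mean i 0 - b j 0)));
  last by move=> j /eqP <-; rewrite [b j 0 in RHS]b_masked; ring.
rewrite (eq_bigl _ _ (patchE^~ i)) -mulr_sumr sumrB -mulr_suml mxE.
by rewrite [_ * (_ / _)]mulrC divfK ?subrr ?mulr0 // gt_eqF ?patch_trace_gt0.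
Qed.

Lemma sqnorm_preview_residual (w : 'cV[R]_(4 ^ a)) :
  sqnorm (Rm *m Pmx a c *m w - b) =
  \sum_j Rm j j * (w (patch j) 0 - patch_mean (patch j) 0) ^+ 2
  + sqnorm (Rm *m Pmx a c *m patch_mean - b).
Proof.
rewrite /sqnorm; under eq_bigr do rewrite preview_residual_sqr.
under [X in _ + X]eq_bigr do rewrite preview_residual_sqr.
rewrite (eq_bigr _ (fun j _ => sqr_split_weighted _ _ _ (patch_mean (patch j) 0) _)).
by rewrite 2!big_split /= -mulr_sumr sum_patch_mean_normal mulr0 addr0.
Qed.

Lemma preview_least_squares (w : 'cV[R]_(4 ^ a)) :
  (forall v, sqnorm (Rm *m Pmx a c *m w - b) <= sqnorm (Rm *m Pmx a c *m v - b))
  <-> w = patch_mean.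
Proof.
have dev_ge0 (v : 'cV[R]_(4 ^ a)) :
    0 <= \sum_j Rm j j * (v (patch j) 0 - patch_mean (patch j) 0) ^+ 2.
  by apply: sumr_ge0 => j _; apply: mulr_ge0; [exact: Rm_ge0 | exact: sqr_ge0].
split=> [min_w | -> v]; last by rewrite [leRHS]sqnorm_preview_residual lerDr.
have := min_w patch_mean; rewrite [leLHS]sqnorm_preview_residual gerDr => dev_le0.
have /psumr_eq0P dev0 : \sum_j Rm j j * (w (patch j) 0 - patch_mean (patch j) 0) ^+ 2 = 0.
  by apply/eqP; rewrite eq_le dev_le0 dev_ge0.
have {}dev0 := dev0 (fun j _ => mulr_ge0 (Rm_ge0 j) (sqr_ge0 _)).
apply/matrixP => i k; rewrite ord1; have [j [pj Rj]] := patch_selected i.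
have {pj}<- : patch j = i by apply: val_inj.
have /eqP := dev0 j isT.
by rewrite mulf_eq0 (negbTE Rj) sqrf_eq0 subr_eq0 => /eqP.
Qed.

End AllPatchesSelected.

End Preview.

Theorem theorem2 (R : realFieldType) (a c : nat) (hac : (a < c)%N)
    (Rm : 'M[R]_(4 ^ c)) (b : 'cV[R]_(4 ^ c)) :
  is_diag_mx Rm ->
  (forall j, Rm j j = 0 \/ Rm j j = 1) ->
  Rm *m b = b ->
  (* (i) *)
  (forall j0 : 'I_(4 ^ a) -> 'I_(4 ^ c),
     (forall i : 'I_(4 ^ a), blk a c (j0 i) = i) ->
     (forall (i : 'I_(4 ^ a)) (j : 'I_(4 ^ c)),
        blk a c j = i -> (Rm j j != 0 <-> j = j0 i)) ->
     forall u : 'cV[R]_(4 ^ a),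
       Rm *m STone c *m Pmx a c *m u = b <->
       u = STone a *m \col_i b (j0 i) 0)
  /\
  (* (ii) *)
  ((forall i : 'I_(4 ^ a), exists j : 'I_(4 ^ c), blk a c j = i /\ Rm j j != 0) ->
   forall u : 'cV[R]_(4 ^ a),
     (forall v : 'cV[R]_(4 ^ a),
        sqnorm (Rm *m STone c *m Pmx a c *m u - b)
        <= sqnorm (Rm *m STone c *m Pmx a c *m v - b)) <->
     u = STone a *m \col_i ((\sum_(j < 4 ^ c | blk a c j == i) b j 0)
                            / (\sum_(j < 4 ^ c | blk a c j == i) Rm j j))).
Proof.
move=> Rm_diag Rm01 Rm_b; have hac' := ltnW hac.
have previewS := @preview_STone R a c hac' Rm.
split=> [j0 j0_patch sel u | sel u].
  rewrite previewS; apply: (iff_trans _ (iff_sym (STone_mulmx_eq _ _ _ _ _))).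
  exact: (@preview_single_solution R a c hac' Rm b Rm_diag Rm01 Rm_b j0 j0_patch sel).
have lsq := @preview_least_squares R a c hac' Rm b Rm_diag Rm01 Rm_b sel.
split=> [min_u | ->].
  apply/STone_mulmx_eq/(lsq _) => v.
  by have := min_u (STone a *m v); rewrite !previewS STone_mulmxK.
by move=> v; rewrite !previewS STone_mulmxK; apply: (lsq _).2.
Qed.
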